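(* Let $S$ be a semigroup and $a_1,a_2,\dotsc$ a sequence in $S$. Then $a_1,a_2,\dotsc$ has a proper sumsequence if and only if it has a sumsequence $b_1,b_2,\dotsc$ with $\bigcap_{n=1}^{\infty}\mathrm{FS}(b_n,b_{n+1},\dotsc)=\emptyset$.
   Context: Semigroups are written additively and are not assumed commutative. For a sequence $a_1,a_2,\dotsc$ and a finite nonempty index set $F=\{i_1<\dotsb<i_m\}\subseteq\mathbb N$, let $a_F:=a_{i_1}+\dotsb+a_{i_m}$. For finite index sets $F_1,F_2$, write $F_1<F_2$ if every element of $F_1$ is smaller than every element of $F_2$. A sumsequence of $a_1,a_2,\dotsc$ is a sequence $a_{F_1},a_{F_2},\dotsc$ for some sequence $F_1<F_2<\dotsb$ of nonempty finite index sets. A sequence is proper if $a_{F_1}\ne a_{F_2}$ for all nonempty finite index sets $F_1<F_2$. $\mathrm{FS}(b_n,b_{n+1},\dotsc)$ denotes the set of all sums $b_{i_1}+\dotsb+b_{i_m}$ with $m\ge1$ and $n\le i_1<\dotsb<i_m$. *)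

From mathcomp Require Import all_boot.
Set Implicit Arguments. Unset Strict Implicit. Unset Printing Implicit Defensive.

(* A finite nonempty index set F = {i_1 < ... < i_m} is represented by the
   strictly increasing nonempty list [:: i_1; ...; i_m]. *)
Definition idxset (F : seq nat) : bool := (F != [::]) && sorted ltn F.

(* a_F = a_{i_1} + ... + a_{i_m} (in this order; op need not be commutative).
   The value on the empty list is an irrelevant default (never used, since
   every index set is required to be nonempty). *)
Definition fsum (S : Type) (op : S -> S -> S) (a : nat -> S) (F : seq nat) : S :=
  if F is i :: t then foldl (fun s j => op s (a j)) (a i) t else a 0.

Definition lt_set (F1 F2 : seq nat) : bool :=
  all (fun i => all (fun j => i < j) F2) F1.

Definition is_sumseq (S : Type) (op : S -> S -> S) (a b : nat -> S) : Prop :=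
  exists F : nat -> seq nat,
    (forall n, idxset (F n)) /\ (forall n, lt_set (F n) (F n.+1)) /\
    (forall n, b n = fsum op a (F n)).

Definition proper_seq (S : Type) (op : S -> S -> S) (a : nat -> S) : Prop :=
  forall F1 F2, idxset F1 -> idxset F2 -> lt_set F1 F2 ->
    fsum op a F1 <> fsum op a F2.

Definition FS (S : Type) (op : S -> S -> S) (b : nat -> S) (n : nat) (x : S) : Prop :=
  exists F, idxset F /\ all (fun i => n <= i) F /\ x = fsum op b F.

(** If b is proper and x = b_F, then x lies in no tail FS(b_n, ...) with
    n > max F, since a representation there would give F < G with b_F = b_G.
    Conversely, if the tails of FS(b) have empty intersection, every x
    escapes some tail FS(b_(esc x), ...).  Only finitely many sums use
    indices below K, so one bound dominates all their escape indices; pick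
    a subsequence c_k = b_(m k) whose gaps exceed these bounds.  For
    F1 < F2, the sum c_F2 then lies in the tail that c_F1 escapes, so
    c_F1 <> c_F2, and c is a proper sumsequence of a. *)

From Stdlib Require Import Classical IndefiniteDescription.
From mathcomp Require Import all_boot.

Set Implicit Arguments.
Unset Strict Implicit.
Unset Printing Implicit Defensive.

Lemma lt_set_trans G F H : G != [::] -> lt_set F G -> lt_set G H -> lt_set F H.
Proof.
case: G => // g G _ /allP FG /allP GH; apply/allP => i iF; apply/allP => j jH.
have /andP [ig _] := FG i iF.
exact: ltn_trans ig (allP (GH g (mem_head _ _)) j jH).
Qed.

Lemma lt_set_chain (F : nat -> seq nat) :
  (forall n, idxset (F n)) -> (forall n, lt_set (F n) (F n.+1)) ->
  forall i j, i < j -> lt_set (F i) (F j).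
Proof.
move=> idxF ltF i; elim=> // j IHj; rewrite ltnS leq_eqVlt => /predU1P [-> | ltij].
  exact: ltF.
by apply: lt_set_trans (IHj ltij) (ltF j); case/andP: (idxF j).
Qed.

Lemma is_sumseq_comp (S : Type) (op : S -> S -> S) (a b : nat -> S) (m : nat -> nat) :
  {homo m : i j / i < j} -> is_sumseq op a b -> is_sumseq op a (b \o m).
Proof.
move=> m_incr [F [idxF [ltF bF]]]; exists (F \o m).
split=> [n | ]; first exact: idxF.
split=> n; last exact: bF.
exact: lt_set_chain idxF ltF _ _ (m_incr _ _ (ltnSn n)).
Qed.

Lemma fsum_comp (S : Type) (op : S -> S -> S) (a : nat -> S) (m : nat -> nat) F :
  F != [::] -> fsum op (a \o m) F = fsum op a (map m F).
Proof. by case: F => //= i t _; elim: t (a (m i)) => //= j t IHt s; apply: IHt. Qed.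

Lemma idxset_map (m : nat -> nat) F :
  {homo m : i j / i < j} -> idxset F -> idxset (map m F).
Proof.
move=> m_incr /andP [F0 sortF]; apply/andP; split; first by case: F F0 sortF.
exact: homo_sorted m_incr _ sortF.
Qed.

Lemma subseq_iota_sorted (K : nat) (s : seq nat) :
  sorted ltn s -> all (fun i => i < K) s -> subseq s (iota 0 K).
Proof.
move=> sort_s /allP s_lt.
suff -> : s = [seq i <- iota 0 K | i \in s] by apply: filter_subseq.
apply: (irr_sorted_eq ltn_trans ltnn sort_s).
  exact: sorted_filter ltn_trans _ _ (iota_ltn_sorted 0 K).
move=> x; rewrite mem_filter mem_iota add0n /=.
by case xs: (x \in s); rewrite //= s_lt.
Qed.

Lemma proper_FS_tails_disjoint (S : Type) (op : S -> S -> S) (b : nat -> S) x :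
  proper_seq op b -> ~ (forall n, FS op b n x).
Proof.
move=> properb inFS.
have [F [idxF [_ xF]]] := inFS 0.
have [G [idxG [geG xG]]] := inFS (\max_(i <- F) i).+1.
apply: (properb F G idxF idxG); last by rewrite -xF -xG.
apply/allP => i iF; apply/allP => j jG.
exact: leq_ltn_trans (leq_bigmax_seq (F := id) i iF isT) (allP geG j jG).
Qed.

Section SparseSubsequence.

Variables (S : Type) (op : S -> S -> S) (b : nat -> S) (esc : S -> nat).
Hypothesis escP : forall x, ~ FS op b (esc x) x.

Definition escape_bound K : nat :=
  \max_(t : K.-tuple bool) esc (fsum op b (mask t (iota 0 K))).

Lemma escape_bound_sup K F :
  sorted ltn F -> all (fun i => i < K) F -> esc (fsum op b F) <= escape_bound K.
Proof.
move=> sortF ltF; have /subseqP [m szm ->] := subseq_iota_sorted sortF ltF.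
rewrite size_iota in szm.
exact: (@leq_bigmax _ (fun t : K.-tuple bool => esc (fsum op b (mask t (iota 0 K))))
  (@Tuple K bool m (introT eqP szm))).
Qed.

Fixpoint sparse_index k : nat :=
  if k is k'.+1 then sparse_index k' + 1 + escape_bound (sparse_index k' + 1)
  else 0.

Lemma sparse_index_incr : {homo sparse_index : i j / i < j}.
Proof. by apply: homo_ltn ltn_trans _ => k /=; rewrite addn1 ltnS leq_addr. Qed.

Lemma sparse_index_mono : {homo sparse_index : i j / i <= j}.
Proof. exact: ltnW_homo sparse_index_incr. Qed.

Lemma escape_sparse_sum p F :
  sorted ltn F -> all (fun i => i <= p) F ->
  esc (fsum op b (map sparse_index F)) <= sparse_index p.+1.
Proof.
move=> sortF leF; apply: leq_trans (leq_addl _ _).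
apply: escape_bound_sup; first exact: homo_sorted sparse_index_incr _ sortF.
apply/allP => _ /mapP [i iF ->].
by rewrite addn1 ltnS sparse_index_mono ?(allP leF).
Qed.

Lemma proper_sparse : proper_seq op (b \o sparse_index).
Proof.
move=> F1 F2 idxF1 idxF2 ltF12.
have [F1_0 sortF1] := andP idxF1; have F2_0 := proj1 (andP idxF2).
rewrite (fsum_comp op b sparse_index F1_0) (fsum_comp op b sparse_index F2_0).
set x := fsum op b _ => xF2.
apply: (@escP x); exists (map sparse_index F2).
split; first exact: idxset_map sparse_index_incr idxF2.
split=> //; apply/allP => _ /mapP [j jF2 ->].
have ltF1j : all (fun i => i < j) F1.
  by apply/allP => i iF1; apply: (allP (allP ltF12 i iF1)).
case: j jF2 ltF1j => [|p] _ ltF1j; first by case: (F1) F1_0 ltF1j.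
exact: escape_sparse_sum.
Qed.

End SparseSubsequence.

Lemma exists_escape_index (S : Type) (op : S -> S -> S) (b : nat -> S) :
  (forall x, ~ (forall n, FS op b n x)) ->
  exists esc : S -> nat, forall x, ~ FS op b (esc x) x.
Proof.
move=> noFS; apply: (functional_choice (fun x n => ~ FS op b n x)) => x.
exact: not_all_ex_not (noFS x).
Qed.

Theorem proposition2p3 (S : Type) (op : S -> S -> S) (op_assoc : associative op)
    (a : nat -> S) :
  (exists b : nat -> S, is_sumseq op a b /\ proper_seq op b) <->
  (exists b : nat -> S, is_sumseq op a b /\
     (forall x : S, ~ (forall n : nat, FS op b n x))).
Proof.
split=> [[b [sumb properb]] | [b [sumb noFS]]].
  by exists b; split=> // x; apply: proper_FS_tails_disjoint.
have [esc escP] := exists_escape_index noFS.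
exists (b \o sparse_index op b esc); split.
  exact: is_sumseq_comp (sparse_index_incr op b esc) sumb.
exact: proper_sparse.
Qed.
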